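(* Let $\mathcal{C}$ be a simplicial complex on ground set $V$ and $\mathbf{d}=(d_u)_{u\in V}$ with all $d_u\ge2$, and assume $\mathcal{A}_{\mathcal{C},\mathbf{d}}$ is unimodular. Let $v$ be a vertex of $\mathcal{C}$ and let $\mathbf{d}'$ be obtained from $\mathbf{d}$ by deleting the entry $d_v$. Then $\mathcal{A}_{\operatorname{link}_v(\mathcal{C}),\mathbf{d}'}$ is unimodular.
   Context: A simplicial complex on a finite ground set $V$ is a family of subsets of $V$ closed under subsets; facets are inclusion-maximal faces; a vertex $v$ of $\mathcal{C}$ means $\{v\}\in\mathcal{C}$. $\operatorname{link}_v(\mathcal{C})=\{F\setminus\{v\}: v\in F\in\mathcal{C}\}$ on ground set $V\setminus\{v\}$. $\mathcal{A}_{\mathcal{C},\mathbf{d}}$ is the $0/1$ matrix with columns indexed by $\mathbf{i}\in\prod_{u\in V}[d_u]$ and rows indexed by pairs $(F,\mathbf{e})$, $F$ a facet, $\mathbf{e}\in\prod_{u\in F}[d_u]$; entry $1$ iff $\mathbf{e}=\mathbf{i}|_F$. An integer matrix is unimodular if every circuit (nonzero integer kernel vector with coprime entries and inclusion-minimal support among nonzero kernel vectors) has all entries in $\{0,\pm1\}$. *)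

From mathcomp Require Import all_boot all_order all_algebra.
Set Implicit Arguments. Unset Strict Implicit. Unset Printing Implicit Defensive.
Import GRing.Theory Num.Theory.
Local Open Scope ring_scope.

Definition is_complex (V : finType) (C : {set {set V}}) : Prop :=
  forall F G : {set V}, F \in C -> G \subset F -> G \in C.

Definition is_facet (V : finType) (C : {set {set V}}) (F : {set V}) : bool :=
  (F \in C) && [forall G in C, (F \subset G) ==> (G == F)].

Definition cols (V : finType) (d : V -> nat) : finType :=
  {dffun forall u : V, 'I_(d u)}.

(* Rows are indexed by pairs (F, e) with F a facet and e in prod_{u in F}[d_u];
   we represent e by any full index e' whose restriction to F is e (duplicate
   rows do not affect the kernel, circuits, or unimodularity). *)
Definition Aentry (V : finType) (d : V -> nat) (F : {set V}) (e i : cols d) : int :=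
  ([forall u in F, e u == i u] : bool)%:R.

Definition in_kernel (V : finType) (C : {set {set V}}) (d : V -> nat)
  (x : cols d -> int) : Prop :=
  forall (F : {set V}) (e : cols d), is_facet C F ->
    \sum_(i : cols d) Aentry F e i * x i = 0.

Arguments in_kernel {V} C d x.

Definition supp (V : finType) (d : V -> nat) (x : cols d -> int) : {set cols d} :=
  [set i | x i != 0].

Definition is_circuit (V : finType) (C : {set {set V}}) (d : V -> nat)
  (x : cols d -> int) : Prop :=
  [/\ in_kernel C d x,
      supp x != set0,
      (\big[gcdn/0%N]_(i : cols d) `|x i|%N = 1%N)
    & forall y : cols d -> int, in_kernel C d y -> supp y != set0 ->
        supp y \subset supp x -> supp y = supp x].

Arguments is_circuit {V} C d x.

Definition unimodular (V : finType) (C : {set {set V}}) (d : V -> nat) : Prop :=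
  forall x : cols d -> int, is_circuit C d x ->
    forall i, x i \in [:: 0; 1; -1].

Definition minus_ground (V : finType) (v : V) : finType := {u : V | u != v}.

Definition link (V : finType) (C : {set {set V}}) (v : V) : {set {set minus_ground v}} :=
  [set [set u : minus_ground v | val u \in F] | F : {set V} in C & v \in F].

(* A circuit y of the link lifts to a circuit of A_{C,d} with the same entries.
   Let z_k be the extension of y by zero off the slice {i | i_v = k}.  A facet
   F of C not containing v sees z_0 and z_1 alike, while for v in F the
   marginals of z_k reduce to those of y on the face F \ {v} of the link, where
   they vanish; hence z_0 - z_1 is in the kernel.  If z_0 itself is in the
   kernel it is the lift, otherwise z_0 - z_1 is.  Minimality of supports comes
   from that of y: each slice at v of a kernel vector of A_{C,d} is a kernel
   vector of the link, hence zero or proportional to y. *)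

From mathcomp Require Import all_boot all_order all_algebra.
From Stdlib Require Import Classical.
Set Implicit Arguments. Unset Strict Implicit. Unset Printing Implicit Defensive.
Import GRing.Theory Num.Theory.
Local Open Scope ring_scope.

Section Kernel.
Variables (W : finType) (dd : W -> nat) (K : {set {set W}}).
Implicit Types (x y z : cols dd -> int) (F G H : {set W}) (e f i : cols dd).

Definition agree F e i : bool := [forall u in F, e u == i u].

Lemma AentryE F e i : Aentry F e i = (agree F e i)%:R. Proof. by []. Qed.

Lemma eq_in_kernel x y : (forall i, x i = y i) -> in_kernel K dd x -> in_kernel K dd y.
Proof.
move=> Exy hx F e hF; rewrite -[RHS](hx F e hF).
by apply: eq_bigr => i _; rewrite Exy.
Qed.

Lemma in_kernelD x y : in_kernel K dd x -> in_kernel K dd y ->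
  in_kernel K dd (fun i => x i + y i).
Proof.
move=> hx hy F e hF; under eq_bigr do rewrite mulrDr.
by rewrite big_split /= hx // hy // addr0.
Qed.

Lemma in_kernelN x : in_kernel K dd x -> in_kernel K dd (fun i => - x i).
Proof.
move=> hx F e hF; under eq_bigr do rewrite mulrN.
by rewrite sumrN hx // oppr0.
Qed.

Lemma in_kernelZ c x : in_kernel K dd x -> in_kernel K dd (fun i => c * x i).
Proof.
move=> hx F e hF; under eq_bigr do rewrite mulrCA.
by rewrite -mulr_sumr hx // mulr0.
Qed.

Lemma in_kernelZK c x : c != 0 -> in_kernel K dd (fun i => c * x i) ->
  in_kernel K dd x.
Proof.
move=> c0 hx F e hF; have := hx F e hF.
under eq_bigr do rewrite mulrCA.
by rewrite -mulr_sumr => /eqP; rewrite mulf_eq0 (negbTE c0) => /eqP.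
Qed.

Lemma facet_exists G : G \in K -> exists2 H, is_facet K H & G \subset H.
Proof.
move=> GK; pose P := [pred H : {set W} | (H \in K) && (G \subset H)].
have [|H /andP[HK GH] Hmax] := @arg_maxnP _ G P (fun H => #|H|).
  by rewrite /= GK subxx.
exists H => //; apply/andP; split => //.
apply/forall_inP => H' H'K; apply/implyP => HH'.
rewrite eq_sym eqEcard HH' /=; apply: Hmax.
by rewrite /= H'K (subset_trans GH HH').
Qed.

Definition merge H e f : cols dd := [ffun u => if u \in H then e u else f u].

Lemma agree_faceE G H e f i : G \subset H ->
  [&& f == merge H f e, agree G e f & agree H f i] =
  (f == merge H i e) && agree G e i.
Proof.
move=> GH; apply/and3P/andP => [[/eqP fE eGf fHi] | [/eqP -> eGi]].
  have fiH u : u \in H -> f u = i u by move=> uH; apply/eqP/(forall_inP fHi).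
  split; last by apply/forall_inP => u uG; rewrite -fiH ?(subsetP GH) ?(forall_inP eGf).
  apply/eqP/ffunP => u; rewrite [in RHS]ffunE.
  by case: ifP => [/fiH //|uH]; rewrite {1}fE ffunE uH.
split.
- by apply/eqP/ffunP => u; rewrite !ffunE; case: ifP.
- by apply/forall_inP => u uG; rewrite ffunE (subsetP GH u uG) (forall_inP eGi).
- by apply/forall_inP => u uH; rewrite ffunE uH.
Qed.

Lemma Aentry_face_sum G H e i : G \subset H ->
  Aentry G e i = \sum_(f | (f == merge H f e) && agree G e f) Aentry H f i.
Proof.
move=> GH; rewrite (eq_bigr (fun f => if agree H f i then 1 else 0)); last first.
  by move=> f _; rewrite AentryE; case: agree.
rewrite -big_mkcondr /=; under eq_bigl => f do rewrite -andbA agree_faceE //.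
rewrite AentryE; case: (agree G e i); last by rewrite big_pred0 // => f; rewrite andbF.
by rewrite (big_pred1 (merge H i e)) // => f; rewrite andbT.
Qed.

Lemma in_kernel_face x G e : in_kernel K dd x -> G \in K ->
  \sum_i Aentry G e i * x i = 0.
Proof.
move=> hx /facet_exists[H HF GH].
under eq_bigr do rewrite (Aentry_face_sum _ _ GH) mulr_suml.
by rewrite exchange_big big1 // => f _; apply: hx.
Qed.

Lemma circuit_proportional y z : is_circuit K dd y ->
  in_kernel K dd z -> supp z != set0 -> supp z \subset supp y ->
  exists c c', [/\ c != 0, c' != 0 & forall i, c * z i = c' * y i].
Proof.
case=> ky /set0Pn[i0]; rewrite inE => yi0 _ hmin kz nz szy.
have Ezy := hmin z kz nz szy.
have zi0 : z i0 != 0 by have: i0 \in supp z; [rewrite Ezy inE | rewrite inE].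
exists (y i0), (z i0); split => // i.
pose t j := y i0 * z j - z i0 * y j.
have kt : in_kernel K dd t.
  by apply: in_kernelD; [apply: in_kernelZ | apply: in_kernelN; apply: in_kernelZ].
have sty : supp t \subset supp y.
  apply/subsetP => j; rewrite !inE; apply: contraNneq => yj.
  have : j \notin supp z by rewrite Ezy inE yj eqxx.
  rewrite inE negbK => /eqP zj.
  by rewrite /t yj zj !mulr0 subrr.
have : i0 \notin supp t by rewrite inE /t mulrC subrr eqxx.
have [t0 _|/(hmin t kt)/(_ sty) -> ] := eqVneq (supp t) set0; last by rewrite inE yi0.
have : i \notin supp t by rewrite t0 inE.
by rewrite inE negbK subr_eq0 => /eqP.
Qed.

End Kernel.

Section Slices.
Variables (V : finType) (d : V -> nat) (v : V).
Local Notation d' := (fun u : minus_ground v => d (val u)).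
Implicit Types (i e : cols d) (j : cols d') (k : 'I_(d v)) (F : {set V}).

Definition proj i : cols d' := [ffun u => i (val u)].

Definition join j k : cols d :=
  [ffun u => match eqVneq u v with
             | EqNotNeq Euv => cast_ord (congr1 d (esym Euv)) k
             | NeqNotEq nuv => j (exist _ u nuv)
             end].

Lemma join_v j k : join j k v = k.
Proof.
rewrite ffunE; case: eqVneq => [Evv|nvv]; first exact: val_inj.
by exfalso; move: nvv; rewrite eqxx.
Qed.

Lemma join_neq j k u (nuv : u != v) : join j k u = j (exist _ u nuv).
Proof.
rewrite ffunE; case: eqVneq => [Euv|nuv']; first by exfalso; move: nuv; rewrite Euv eqxx.
by rewrite (bool_irrelevance nuv' nuv).
Qed.

Lemma proj_join j k : proj (join j k) = j.
Proof. by apply/ffunP => -[u nuv]; rewrite ffunE join_neq. Qed.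

Lemma join_proj i k : i v = k -> join (proj i) k = i.
Proof.
move=> ivk; apply/ffunP => u; have [->|nuv] := eqVneq u v; first by rewrite join_v.
by rewrite join_neq ffunE.
Qed.

Lemma sum_level (f : cols d -> int) k : (forall i, i v != k -> f i = 0) ->
  \sum_i f i = \sum_j f (join j k).
Proof.
move=> f0; rewrite (bigID (fun i => i v == k)) /= [X in _ + X]big1 ?addr0; last first.
  by move=> i /f0.
rewrite (reindex_onto (join^~ k) proj) /=; last by move=> i /eqP /join_proj.
by apply: eq_bigl => j; rewrite join_v proj_join !eqxx.
Qed.

Definition trace F : {set minus_ground v} := [set u | val u \in F].

Lemma agree_join F e j k : agree F e (join j k) =
  ((v \in F) ==> (e v == k)) && agree (trace F) (proj e) j.
Proof.
apply/forall_inP/andP => [agr | [/implyP agrv agr'] u uF].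
  split; first by apply/implyP => /agr; rewrite join_v.
  by apply/forall_inP => -[u nuv]; rewrite inE ffunE => /agr; rewrite join_neq.
have [Euv|nuv] := eqVneq u v; first by subst u; rewrite join_v agrv.
by rewrite join_neq; have := forall_inP agr' (exist _ u nuv); rewrite inE ffunE; apply.
Qed.

Definition slice (z : cols d -> int) k j : int := z (join j k).

Lemma mem_supp_slice (z : cols d -> int) i :
  (proj i \in supp (slice z (i v))) = (z i != 0).
Proof. by rewrite inE /slice join_proj. Qed.

Lemma slice_neq0 (z : cols d -> int) i : z i != 0 -> supp (slice z (i v)) != set0.
Proof. by rewrite -(mem_supp_slice z) => zi; apply/set0Pn; exists (proj i). Qed.

Definition extend (y : cols d' -> int) k i : int := if i v == k then y (proj i) else 0.

Lemma extend_join y k j : extend y k (join j k) = y j.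
Proof. by rewrite /extend join_v eqxx proj_join. Qed.

Lemma extend_join_neq y k k' j : k' != k -> extend y k (join j k') = 0.
Proof. by rewrite /extend join_v => /negbTE ->. Qed.

Lemma extend_neq0 y k i : extend y k i != 0 -> i v = k /\ y (proj i) != 0.
Proof. by rewrite /extend; case: (i v =P k); rewrite ?eqxx. Qed.

Lemma sum_Aentry_extend F e y k :
  \sum_i Aentry F e i * extend y k i =
  ((v \in F) ==> (e v == k))%:R * \sum_j Aentry (trace F) (proj e) j * y j.
Proof.
rewrite (@sum_level _ k); last by move=> i /negbTE ivk; rewrite /extend ivk mulr0.
rewrite mulr_sumr; apply: eq_bigr => j _.
by rewrite extend_join !AentryE agree_join -mulnb natrM mulrA.
Qed.

End Slices.

Section Link.
Variables (V : finType) (C : {set {set V}}) (d : V -> nat) (v : V).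
Local Notation d' := (fun u : minus_ground v => d (val u)).
Local Notation kerC := (in_kernel C d).
Local Notation kerL := (in_kernel (link C v) d').

Lemma trace_in_link F : F \in C -> v \in F -> trace v F \in link C v.
Proof. by move=> FC vF; apply/imsetP; exists F; rewrite ?inE ?FC. Qed.

Lemma in_kernel_slice z k : kerC z -> kerL (slice z k).
Proof.
move=> kz G e' /andP[/imsetP[F] ]; rewrite inE => /andP[FC vF] -> _.
have := in_kernel_face (join e' k) kz FC.
rewrite (@sum_level _ _ v _ k) => [h0|i ivk]; last first.
  rewrite AentryE; suff /negbTE -> : ~~ agree F (join e' k) i by rewrite mul0r.
  by apply: contra ivk => /forall_inP/(_ v vF); rewrite join_v eq_sym.
rewrite -[RHS]h0; apply: eq_bigr => j _.
by rewrite !AentryE agree_join vF join_v eqxx proj_join.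
Qed.

Lemma in_kernel_extendB y k k' : kerL y ->
  kerC (fun i => extend y k i - extend y k' i).
Proof.
move=> ky F e /andP[FC _]; under eq_bigr do rewrite mulrBr.
rewrite sumrB !sum_Aentry_extend; case vF: (v \in F); last by rewrite subrr.
by rewrite (in_kernel_face _ ky (trace_in_link FC vF)) !mulr0 subrr.
Qed.

End Link.

Section LiftCircuit.
Variables (V : finType) (C : {set {set V}}) (d : V -> nat) (v : V).
Local Notation d' := (fun u : minus_ground v => d (val u)).
Local Notation kerC := (in_kernel C d).
Variable y : cols d' -> int.
Hypothesis circuit_y : is_circuit (link C v) d' y.

Definition lies_over (z : cols d -> int) : Prop :=
  forall i, z i != 0 -> y (proj v i) != 0.

Lemma slice_supp_sub z k : lies_over z -> supp (slice z k) \subset supp y.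
Proof. by move=> zy; apply/subsetP => j; rewrite !inE => /zy; rewrite proj_join. Qed.

Lemma slice_supp_eq z k : kerC z -> lies_over z -> supp (slice z k) != set0 ->
  supp (slice z k) = supp y.
Proof.
case: circuit_y => _ _ _ ymin kz zy nz.
exact: ymin (in_kernel_slice k kz) nz (slice_supp_sub k zy).
Qed.

Lemma extend_in_kernel z k : kerC z -> lies_over z ->
  (forall i, z i != 0 -> i v = k) -> supp (slice z k) != set0 -> kerC (extend y k).
Proof.
move=> kz zy zk nz.
have [c [c' [c0 c'0 czy]]] := circuit_proportional circuit_y
  (in_kernel_slice k kz) nz (slice_supp_sub k zy).
apply: (in_kernelZK c'0); apply: eq_in_kernel (in_kernelZ c kz) => i.
rewrite /extend; case: eqP => [ivk|ivk]; first by rewrite -czy /slice join_proj.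
by have [->|/zk] := eqVneq (z i) 0; rewrite ?mulr0.
Qed.

Lemma lift_circuit x k : kerC x -> (forall j, x (join j k) = y j) ->
  (forall z, kerC z -> supp z != set0 -> supp z \subset supp x -> supp z = supp x) ->
  is_circuit C d x.
Proof.
case: circuit_y => _ /set0Pn[j yj] gcd_y _ kx xy xmin; split=> //.
  by apply/set0Pn; exists (join j k); move: yj; rewrite !inE xy.
apply/eqP; rewrite -dvdn1 -gcd_y; apply/dvdn_biggcdP => j' _.
by rewrite -xy (biggcdn_inf (join j' k)).
Qed.

Lemma extend_circuit k : kerC (extend y k) -> is_circuit C d (extend y k).
Proof.
move=> kx; apply: lift_circuit (extend_join y k) _ => // z kz nz /subsetP zx.
have zk i : z i != 0 -> i v = k /\ y (proj v i) != 0.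
  by move=> zi; apply: extend_neq0; have := zx i; rewrite !inE; apply.
have zy : lies_over z by move=> i /zk[].
have nzk : supp (slice z k) != set0.
  by case/set0Pn: nz => i; rewrite inE => zi; rewrite -(zk i zi).1 slice_neq0.
apply/eqP; rewrite eqEsubset; apply/andP; split; first exact/subsetP.
apply/subsetP => i /[!inE] /extend_neq0[ivk yi].
by rewrite -(mem_supp_slice v) ivk (slice_supp_eq kz zy nzk) inE.
Qed.

Lemma slice0_extend_in_kernel z a b : kerC z -> lies_over z ->
  (forall i, z i != 0 -> i v = a \/ i v = b) -> supp z != set0 ->
  supp (slice z a) = set0 -> kerC (extend y b).
Proof.
move=> kz zy zab /set0Pn[i0]; rewrite inE => zi0 sa0.
have zb i : z i != 0 -> i v = b.
  move=> zi; case: (zab i zi) => [iva|//].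
  by move: (slice_neq0 v zi); rewrite iva sa0 eqxx.
by apply: (extend_in_kernel kz zy zb); rewrite -(zb i0 zi0); apply: slice_neq0.
Qed.

Lemma extendB_circuit k k' : k != k' -> ~ kerC (extend y k) ->
  is_circuit C d (fun i => extend y k i - extend y k' i).
Proof.
move=> kk' nker; set x := fun i => _ - _.
have kx : kerC x by apply: in_kernel_extendB; case: circuit_y.
have xk j : x (join j k) = y j by rewrite /x extend_join extend_join_neq ?subr0 // eq_sym.
have xlev i : x i != 0 -> (i v = k \/ i v = k') /\ y (proj v i) != 0.
  rewrite /x; case: (eqVneq (extend y k i) 0) => [->|/extend_neq0[-> ->]]; last by auto.
  by rewrite sub0r oppr_eq0 => /extend_neq0[-> ->]; auto.
apply: lift_circuit xk _ => // z kz nz /subsetP zx.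
have zlev i : z i != 0 -> (i v = k \/ i v = k') /\ y (proj v i) != 0.
  by move=> zi; apply: xlev; have := zx i; rewrite !inE; apply.
have zy : lies_over z by move=> i /zlev[].
(* A vanishing slice would make z a multiple of a single extension of y. *)
have nz_slice b : b = k \/ b = k' -> supp (slice z b) != set0.
  move=> hb; apply/negP => /eqP sb0; apply: nker.
  case: hb => Eb; subst b; last first.
    by apply: slice0_extend_in_kernel kz zy _ nz sb0 => i /zlev[/or_comm].
  have kk : kerC (extend y k').
    by apply: slice0_extend_in_kernel kz zy _ nz sb0 => i /zlev[].
  by apply: eq_in_kernel (in_kernelD kx kk) => i; rewrite /x subrK.
apply/eqP; rewrite eqEsubset; apply/andP; split; first exact/subsetP.
apply/subsetP => i /[!inE] /xlev[ivk yi].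
by rewrite -(mem_supp_slice v) (slice_supp_eq kz zy (nz_slice _ ivk)) inE.
Qed.

End LiftCircuit.

Lemma unimodular_link (V : finType) (C : {set {set V}}) (d : V -> nat) (v : V) :
  (1 < d v)%N -> unimodular C d ->
  unimodular (link C v) (fun u : minus_ground v => d (val u)).
Proof.
move=> dv2 unimodC y circuit_y j.
pose k0 : 'I_(d v) := Ordinal (ltnW dv2); pose k1 : 'I_(d v) := Ordinal dv2.
have k01 : k0 != k1 by [].
have [ker0|nker0] := classic (in_kernel C d (extend y k0)).
  by rewrite -(extend_join y k0 j); apply: unimodC (extend_circuit circuit_y ker0) _.
have := unimodC _ (extendB_circuit circuit_y k01 nker0) (join j k0).
by rewrite extend_join extend_join_neq ?subr0 // eq_sym.
Qed.

Unset Implicit Arguments.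

Theorem corollary7p4 (V : finType) (C : {set {set V}}) (d : V -> nat) (v : V) :
  is_complex C ->
  (forall u : V, (2 <= d u)%N) ->
  unimodular C d ->
  [set v] \in C ->
  unimodular (link C v) (fun u : minus_ground v => d (val u)).
Proof. by move=> _ d_ge2 unimodC _; exact: unimodular_link (d_ge2 v) unimodC. Qed.
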